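(* Let $\mathcal{T}$ be an artin triangulated $R$-category and let $A\xrightarrow{s}B\xrightarrow{g}C\xrightarrow{\Psi}A[1]$ be a distinguished triangle that does not split (i.e. $\Psi\neq0$), such that $\mathrm{Hom}_\mathcal{T}(A,C)=\mathrm{Hom}_\mathcal{T}(A[1],C)=0$ and $C$ is indecomposable. Then there exists a non-split distinguished triangle $A'\to B'\to C\to A'[1]$ such that $A'$ is a direct summand of $A$ and $B'$ is an indecomposable direct summand of $B$.
   Context: Artin triangulated $R$-category: a triangulated category $\mathcal{T}$ with $R$ a commutative artinian ring, Hom-sets finitely generated $R$-modules, $R$-bilinear composition, $R$-linear shift functor $[1]$, and $\mathcal{T}$ Krull–Schmidt (every object is a finite direct sum of indecomposables with local endomorphism rings). A distinguished triangle $X\to Y\to Z\xrightarrow{h}X[1]$ splits if $h=0$. *)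

From HB Require Import structures.
From mathcomp Require Import all_boot all_algebra.
Set Implicit Arguments. Unset Strict Implicit. Unset Printing Implicit Defensive.
Import GRing.Theory.
Local Open Scope ring_scope.

Definition is_ideal (R : comPzRingType) (I : R -> Prop) : Prop :=
  I 0 /\ (forall x y, I x -> I y -> I (x + y)) /\ (forall a x, I x -> I (a * x)).

Definition artinian (R : comPzRingType) : Prop :=
  forall I : nat -> R -> Prop,
    (forall n, is_ideal (I n)) ->
    (forall n x, I n.+1 x -> I n x) ->
    exists N, forall n, (N <= n)%N -> forall x, I n x <-> I N x.

Record TriCatData (R : comPzRingType) := {
  Obj :> Type;
  Mor : Obj -> Obj -> lmodType R;
  comp : forall X Y Z : Obj, Mor Y Z -> Mor X Y -> Mor X Z;
  idm : forall X : Obj, Mor X X;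
  sh : Obj -> Obj;
  shm : forall X Y : Obj, Mor X Y -> Mor (sh X) (sh Y);
  dist : forall X Y Z : Obj, Mor X Y -> Mor Y Z -> Mor Z (sh X) -> Prop
    (* dist f g h : X -f-> Y -g-> Z -h-> X[1] is distinguished *)
}.
Arguments Mor {R C} : rename.
Arguments comp {R C X Y Z} : rename.
Arguments idm {R C} : rename.
Arguments sh {R C} : rename.
Arguments shm {R C X Y} : rename.
Arguments dist {R C X Y Z} : rename.

Notation "g \co f" := (comp g f) (at level 40, left associativity).

Section TriCatAx.
Variables (R : comPzRingType) (C : TriCatData R).

Definition cat_axioms : Prop :=
  (forall (W X Y Z : C) (h : Mor Y Z) (g : Mor X Y) (f : Mor W X),
      h \co (g \co f) = (h \co g) \co f) /\
  (forall (X Y : C) (f : Mor X Y), idm Y \co f = f) /\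
  (forall (X Y : C) (f : Mor X Y), f \co idm X = f) /\
  (forall (X Y Z : C) (a : R) (g g' : Mor Y Z) (f : Mor X Y),
      (a *: g + g') \co f = a *: (g \co f) + (g' \co f)) /\
  (forall (X Y Z : C) (a : R) (g : Mor Y Z) (f f' : Mor X Y),
      g \co (a *: f + f') = a *: (g \co f) + (g \co f')).

Definition is_zero (X : C) : Prop := idm X = 0.

Definition is_iso (X Y : C) (f : Mor X Y) : Prop :=
  exists g : Mor Y X, g \co f = idm X /\ f \co g = idm Y.

Definition biprod (X1 X2 X : C) (i1 : Mor X1 X) (i2 : Mor X2 X)
    (p1 : Mor X X1) (p2 : Mor X X2) : Prop :=
  p1 \co i1 = idm X1 /\ p2 \co i2 = idm X2 /\
  p1 \co i2 = 0 /\ p2 \co i1 = 0 /\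
  (i1 \co p1) + (i2 \co p2) = idm X.

Definition additive : Prop :=
  (exists Z : C, is_zero Z) /\
  (forall X1 X2 : C, exists (X : C) (i1 : Mor X1 X) (i2 : Mor X2 X)
      (p1 : Mor X X1) (p2 : Mor X X2), biprod i1 i2 p1 p2).

Definition direct_summand (A' A : C) : Prop :=
  exists (A'' : C) (i1 : Mor A' A) (i2 : Mor A'' A) (p1 : Mor A A') (p2 : Mor A A''),
    biprod i1 i2 p1 p2.

Definition indecomposable (X : C) : Prop :=
  ~ is_zero X /\
  forall (X1 X2 : C) (i1 : Mor X1 X) (i2 : Mor X2 X) (p1 : Mor X X1) (p2 : Mor X X2),
    biprod i1 i2 p1 p2 -> is_zero X1 \/ is_zero X2.

(* End(X) is a local ring: nonzero, and for every f, f or 1 - f is a unit *)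
Definition local_end (X : C) : Prop :=
  ~ is_zero X /\ forall f : Mor X X, is_iso f \/ is_iso (idm X - f).

(* [1] is an R-linear additive auto-equivalence *)
Definition shift_axioms : Prop :=
  (forall X : C, shm (idm X) = idm (sh X)) /\
  (forall (X Y Z : C) (g : Mor Y Z) (f : Mor X Y), shm (g \co f) = shm g \co shm f) /\
  (forall (X Y : C) (a : R) (f f' : Mor X Y), shm (a *: f + f') = a *: shm f + shm f') /\
  (forall (X Y : C) (f f' : Mor X Y), shm f = shm f' -> f = f') /\
  (forall (X Y : C) (g : Mor (sh X) (sh Y)), exists f : Mor X Y, shm f = g) /\
  (forall Y : C, exists (X : C) (u : Mor (sh X) Y), is_iso u).

Definition TR1 : Prop :=
  (forall (X Y Z X' Y' Z' : C) (f : Mor X Y) (g : Mor Y Z) (h : Mor Z (sh X))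
      (f' : Mor X' Y') (g' : Mor Y' Z') (h' : Mor Z' (sh X'))
      (a : Mor X X') (b : Mor Y Y') (c : Mor Z Z'),
      is_iso a -> is_iso b -> is_iso c ->
      b \co f = f' \co a -> c \co g = g' \co b -> shm a \co h = h' \co c ->
      dist f g h -> dist f' g' h') /\
  (forall (X Z : C), is_zero Z -> dist (idm X) (0 : Mor X Z) (0 : Mor Z (sh X))) /\
  (forall (X Y : C) (f : Mor X Y), exists (Z : C) (g : Mor Y Z) (h : Mor Z (sh X)),
      dist f g h).

Definition TR2 : Prop :=
  forall (X Y Z : C) (f : Mor X Y) (g : Mor Y Z) (h : Mor Z (sh X)),
    dist f g h <-> dist g h (- shm f).

Definition TR3 : Prop :=
  forall (X Y Z X' Y' Z' : C) (f : Mor X Y) (g : Mor Y Z) (h : Mor Z (sh X))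
      (f' : Mor X' Y') (g' : Mor Y' Z') (h' : Mor Z' (sh X'))
      (a : Mor X X') (b : Mor Y Y'),
    dist f g h -> dist f' g' h' -> b \co f = f' \co a ->
    exists c : Mor Z Z', c \co g = g' \co b /\ shm a \co h = h' \co c.

Definition TR4 : Prop :=
  forall (X Y Z Z' X' Y' : C) (f : Mor X Y) (g : Mor Y Z)
      (f1 : Mor Y Z') (f2 : Mor Z' (sh X))
      (g1 : Mor Z X') (g2 : Mor X' (sh Y))
      (h1 : Mor Z Y') (h2 : Mor Y' (sh X)),
    dist f f1 f2 -> dist g g1 g2 -> dist (g \co f) h1 h2 ->
    exists (u : Mor Z' Y') (v : Mor Y' X'),
      dist u v (shm f1 \co g2) /\
      u \co f1 = h1 \co g /\ h2 \co u = f2 /\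
      v \co h1 = g1 /\ shm f \co h2 = g2 \co v.

Definition hom_fin_gen : Prop :=
  forall X Y : C, exists (n : nat) (v : 'I_n -> Mor X Y),
    forall f : Mor X Y, exists c : 'I_n -> R, f = \sum_(i < n) c i *: v i.

Definition krull_schmidt : Prop :=
  forall X : C, exists (n : nat) (Xs : 'I_n -> C)
      (inj : forall k, Mor (Xs k) X) (prj : forall k, Mor X (Xs k)),
    (forall k, prj k \co inj k = idm (Xs k)) /\
    (forall k l, k != l -> prj l \co inj k = 0) /\
    \sum_(k < n) (inj k \co prj k) = idm X /\
    (forall k, indecomposable (Xs k) /\ local_end (Xs k)).

End TriCatAx.

Record ArtinTriCat (R : comPzRingType) := {
  atc_data :> TriCatData R;
  atc_artinian : artinian R;
  atc_cat : cat_axioms atc_data;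
  atc_additive : additive atc_data;
  atc_shift : shift_axioms atc_data;
  atc_TR1 : TR1 atc_data;
  atc_TR2 : TR2 atc_data;
  atc_TR3 : TR3 atc_data;
  atc_TR4 : TR4 atc_data;
  atc_fin : hom_fin_gen atc_data;
  atc_KS : krull_schmidt atc_data
}.

From HB Require Import structures.
From mathcomp Require Import all_boot all_algebra.
Import GRing.Theory.
Local Open Scope ring_scope.

(* Since End(C) is local and Hom(A, C) = 0, every idempotent of B descends to an
   endomorphism of C, and Hom(A[1], C) = 0 makes g epic, so these descended
   endomorphisms of a Krull-Schmidt decomposition of B sum to 1; one of them,
   for a summand B_k, is an automorphism, so g factors through B_k. Completing
   B_k -> C to a triangle A_k -> B_k -> C -> A_k[1] and comparing it with the
   given one in both directions gives an endomorphism of A_k that is 1 plus a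
   square-zero map, hence A_k is a retract of A. *)

Section ArtinTriCatTheory.
Context {R : comPzRingType} {T : ArtinTriCat R}.

Lemma compA {W X Y Z : T} (h : Mor Y Z) (g : Mor X Y) (f : Mor W X) :
  h \co (g \co f) = (h \co g) \co f.
Proof. by case: (atc_cat T). Qed.

Lemma comp_idl {X Y : T} (f : Mor X Y) : idm Y \co f = f.
Proof. by case: (atc_cat T) => _ []. Qed.

Lemma comp_idr {X Y : T} (f : Mor X Y) : f \co idm X = f.
Proof. by case: (atc_cat T) => _ [] _ []. Qed.

Lemma comp_linl {X Y Z : T} a (g g' : Mor Y Z) (f : Mor X Y) :
  (a *: g + g') \co f = a *: (g \co f) + (g' \co f).
Proof. by case: (atc_cat T) => _ [] _ [] _ []. Qed.

Lemma comp_linr {X Y Z : T} a (g : Mor Y Z) (f f' : Mor X Y) :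
  g \co (a *: f + f') = a *: (g \co f) + (g \co f').
Proof. by case: (atc_cat T) => _ [] _ [] _ []. Qed.

Lemma compDl {X Y Z : T} (g g' : Mor Y Z) (f : Mor X Y) :
  (g + g') \co f = g \co f + g' \co f.
Proof. by have := comp_linl 1 g g' f; rewrite !scale1r. Qed.

Lemma compDr {X Y Z : T} (g : Mor Y Z) (f f' : Mor X Y) :
  g \co (f + f') = g \co f + g \co f'.
Proof. by have := comp_linr 1 g f f'; rewrite !scale1r. Qed.

Lemma comp0l {X Y Z : T} (f : Mor X Y) : (0 : Mor Y Z) \co f = 0.
Proof. by apply: (addrI (0 \co f)); rewrite -compDl !addr0. Qed.

Lemma comp0r {X Y Z : T} (g : Mor Y Z) : g \co (0 : Mor X Y) = 0.
Proof. by apply: (addrI (g \co 0)); rewrite -compDr !addr0. Qed.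

Lemma compNl {X Y Z : T} (g : Mor Y Z) (f : Mor X Y) : (- g) \co f = - (g \co f).
Proof. by apply/eqP; rewrite -subr_eq0 opprK -compDl addNr comp0l. Qed.

Lemma compNr {X Y Z : T} (g : Mor Y Z) (f : Mor X Y) : g \co (- f) = - (g \co f).
Proof. by apply/eqP; rewrite -subr_eq0 opprK -compDr addNr comp0r. Qed.

Lemma compBl {X Y Z : T} (g g' : Mor Y Z) (f : Mor X Y) :
  (g - g') \co f = g \co f - g' \co f.
Proof. by rewrite compDl compNl. Qed.

Lemma compBr {X Y Z : T} (g : Mor Y Z) (f f' : Mor X Y) :
  g \co (f - f') = g \co f - g \co f'.
Proof. by rewrite compDr compNr. Qed.

Lemma comp_suml {X Y Z : T} (f : Mor X Y) n (F : 'I_n -> Mor Y Z) :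
  (\sum_(k < n) F k) \co f = \sum_(k < n) (F k \co f).
Proof. by elim/big_rec2: _ => [|i y1 y2 _ <-]; rewrite ?comp0l ?compDl. Qed.

Lemma comp_sumr {X Y Z : T} (g : Mor Y Z) n (F : 'I_n -> Mor X Y) :
  g \co (\sum_(k < n) F k) = \sum_(k < n) (g \co F k).
Proof. by elim/big_rec2: _ => [|i y1 y2 _ <-]; rewrite ?comp0r ?compDr. Qed.

Lemma shm1 {X : T} : shm (idm X) = idm (sh X).
Proof. by case: (atc_shift T). Qed.

Lemma shm_comp {X Y Z : T} (g : Mor Y Z) (f : Mor X Y) : shm (g \co f) = shm g \co shm f.
Proof. by case: (atc_shift T) => _ []. Qed.

Lemma shmD {X Y : T} (f f' : Mor X Y) : shm (f + f') = shm f + shm f'.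
Proof.
by case: (atc_shift T) => _ [] _ [] lin _; have := lin _ _ 1 f f'; rewrite !scale1r.
Qed.

Lemma shm_inj {X Y : T} (f f' : Mor X Y) : shm f = shm f' -> f = f'.
Proof. by case: (atc_shift T) => _ [] _ [] _ [] inj _; apply: inj. Qed.

Lemma shm_full {X Y : T} (g : Mor (sh X) (sh Y)) : exists f : Mor X Y, shm f = g.
Proof. by case: (atc_shift T) => _ [] _ [] _ [] _ [] full _; apply: full. Qed.

Lemma sh_esurj (Y : T) : exists (X : T) (u : Mor (sh X) Y), is_iso u.
Proof. by case: (atc_shift T) => _ [] _ [] _ [] _ [] _ ess; apply: ess. Qed.

Lemma shm0 {X Y : T} : shm (0 : Mor X Y) = 0.
Proof. by apply: (addrI (shm (0 : Mor X Y))); rewrite -shmD !addr0. Qed.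

Lemma shmN {X Y : T} (f : Mor X Y) : shm (- f) = - shm f.
Proof. by apply/eqP; rewrite -subr_eq0 opprK -shmD addNr shm0. Qed.

Lemma shmB {X Y : T} (f f' : Mor X Y) : shm (f - f') = shm f - shm f'.
Proof. by rewrite shmD shmN. Qed.

Lemma is_iso_idm (X : T) : is_iso (idm X).
Proof. by exists (idm X); rewrite comp_idl. Qed.

Lemma is_iso_comp {X Y Z : T} (g : Mor Y Z) (f : Mor X Y) :
  is_iso f -> is_iso g -> is_iso (g \co f).
Proof.
move=> [f' [f'f ff']] [g' [g'g gg']]; exists (f' \co g'); split.
- by rewrite -compA (compA g') g'g comp_idl.
- by rewrite -compA (compA f) ff' comp_idl.
Qed.

Lemma is_iso_idmD_nilpotent {X : T} (phi : Mor X X) :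
  phi \co phi = 0 -> is_iso (idm X + phi).
Proof.
move=> phi2; exists (idm X - phi).
by split; rewrite ?compBl ?compDl ?compBr ?compDr !comp_idl ?comp_idr phi2;
  rewrite ?subr0 ?addr0 ?addrK ?subrK.
Qed.

Lemma dist_iso {X Y Z X' Y' Z' : T}
    {f : Mor X Y} {g : Mor Y Z} {h : Mor Z (sh X)}
    {f' : Mor X' Y'} {g' : Mor Y' Z'} {h' : Mor Z' (sh X')}
    (a : Mor X X') (b : Mor Y Y') (c : Mor Z Z') :
  is_iso a -> is_iso b -> is_iso c ->
  b \co f = f' \co a -> c \co g = g' \co b -> shm a \co h = h' \co c ->
  dist f g h -> dist f' g' h'.
Proof. by case: (atc_TR1 T) => iso _; apply: iso. Qed.

Lemma dist_idm_zero (X : T) {Z : T} :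
  is_zero Z -> dist (idm X) (0 : Mor X Z) (0 : Mor Z (sh X)).
Proof. by case: (atc_TR1 T) => _ [triv _]; apply: triv. Qed.

Lemma dist_ex {X Y : T} (f : Mor X Y) :
  exists (Z : T) (g : Mor Y Z) (h : Mor Z (sh X)), dist f g h.
Proof. by case: (atc_TR1 T) => _ [_ cone]; apply: cone. Qed.

Lemma dist_rot {X Y Z : T} {f : Mor X Y} {g : Mor Y Z} {h : Mor Z (sh X)} :
  dist f g h -> dist g h (- shm f).
Proof. exact: (proj1 (@atc_TR2 _ T _ _ _ f g h)). Qed.

Lemma dist_unrot {X Y Z : T} {f : Mor X Y} {g : Mor Y Z} {h : Mor Z (sh X)} :
  dist g h (- shm f) -> dist f g h.
Proof. exact: (proj2 (@atc_TR2 _ T _ _ _ f g h)). Qed.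

Lemma dist_morph {X Y Z X' Y' Z' : T}
    {f : Mor X Y} {g : Mor Y Z} {h : Mor Z (sh X)}
    {f' : Mor X' Y'} {g' : Mor Y' Z'} {h' : Mor Z' (sh X')}
    (a : Mor X X') (b : Mor Y Y') :
  dist f g h -> dist f' g' h' -> b \co f = f' \co a ->
  exists c : Mor Z Z', c \co g = g' \co b /\ shm a \co h = h' \co c.
Proof. exact: atc_TR3. Qed.

Lemma zero_obj_ex : exists Z : T, is_zero Z.
Proof. by case: (atc_additive T). Qed.

Lemma dist_zero_idm (W : T) :
  exists Q : T, dist (0 : Mor Q W) (idm W) (0 : Mor W (sh Q)).
Proof.
have [Z0 Z0_zero] := zero_obj_ex.
have [Q [u [u' [u'u uu']]]] := sh_esurj Z0.
exists Q; apply: dist_unrot; rewrite shm0 oppr0.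
apply: (dist_iso (idm W) (idm W) u' _ _ _ _ _ _ (dist_idm_zero W Z0_zero)).
- exact: is_iso_idm.
- exact: is_iso_idm.
- by exists u.
- by [].
- by rewrite comp0r comp0l.
- by rewrite comp0r comp0l.
Qed.

Lemma dist_comp0 {X Y Z : T} {f : Mor X Y} {g : Mor Y Z} {h : Mor Z (sh X)} :
  dist f g h -> g \co f = 0.
Proof.
move=> D; have [Z0 Z0_zero] := zero_obj_ex.
have [c [cg _]] := dist_morph (idm X) f (dist_idm_zero X Z0_zero) D (erefl _).
by rewrite -cg comp0r.
Qed.

Lemma dist_factor_third {X Y Z W : T} {f : Mor X Y} {g : Mor Y Z} {h : Mor Z (sh X)}
    (x : Mor Y W) :
  dist f g h -> x \co f = 0 -> exists y : Mor Z W, x = y \co g.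
Proof.
move=> D xf0; have [Q DQ] := dist_zero_idm W.
have [c [cg _]] := dist_morph (0 : Mor X Q) x D DQ (etrans xf0 (esym (comp0r _))).
by exists c; rewrite cg comp_idl.
Qed.

Lemma dist_factor_first {X Y Z W : T} {f : Mor X Y} {g : Mor Y Z} {h : Mor Z (sh X)}
    (x : Mor W Y) :
  dist f g h -> g \co x = 0 -> exists y : Mor W X, x = f \co y.
Proof.
move=> D gx0; have [Z0 Z0_zero] := zero_obj_ex.
have D0 := dist_rot (dist_idm_zero W Z0_zero).
have [c [_ shxc]] := dist_morph x (0 : Mor Z0 Z) D0 (dist_rot D)
  (etrans (comp0l _) (esym gx0)).
have [y shy] := shm_full c.
exists y; apply: shm_inj; apply: oppr_inj.
by move: shxc; rewrite -shy shm1 compNr compNl comp_idr shm_comp.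
Qed.

Lemma dist_third_zero {X Y Z W : T} {f : Mor X Y} {g : Mor Y Z} {h : Mor Z (sh X)}
    (x : Mor Z W) :
  dist f g h -> (forall u : Mor (sh X) W, u = 0) -> x \co g = 0 -> x = 0.
Proof.
move=> D HomXW0 xg0; have [y ->] := dist_factor_third x (dist_rot D) xg0.
by rewrite (HomXW0 y) comp0l.
Qed.

Lemma dist_split_epi {X Y Z : T} {f : Mor X Y} {g : Mor Y Z} {h : Mor Z (sh X)} :
  dist f g h -> h = 0 -> exists y : Mor Z Y, g \co y = idm Z.
Proof.
move=> D h0.
have [y idmE] := dist_factor_first (idm Z) (dist_rot D) (etrans (comp_idr h) h0).
by exists y.
Qed.

Lemma dist_split_mono {X Y Z : T} {f : Mor X Y} {g : Mor Y Z} {h : Mor Z (sh X)}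
    (r : Mor Y X) :
  dist f g h -> r \co f = idm X -> exists sg : Mor Z Y, biprod f sg r g.
Proof.
move=> D rf.
have h0 : h = 0.
  have /eqP := dist_comp0 (dist_rot (dist_rot D)).
  rewrite compNl oppr_eq0 => /eqP shf_h0.
  by rewrite -(comp_idl h) -shm1 -rf shm_comp -compA shf_h0 comp0r.
have g_epi (W : T) (x : Mor Z W) : x \co g = 0 -> x = 0.
  by move=> xg0; have [y ->] := dist_factor_third x (dist_rot D) xg0; rewrite h0 comp0r.
have frf : (idm Y - f \co r) \co f = 0.
  by rewrite compBl comp_idl -compA rf comp_idr subrr.
have [sg sgE] := dist_factor_third _ D frf.
have gsg : g \co sg = idm Z.
  apply/eqP; rewrite -subr_eq0; apply/eqP/g_epi.
  by rewrite compBl -compA -sgE compBr comp_idr compA (dist_comp0 D) comp0l subr0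
    comp_idl subrr.
have rsg : r \co sg = 0.
  by apply: g_epi; rewrite -compA -sgE compBr comp_idr compA rf comp_idl subrr.
exists sg; do 4!split=> //; last by rewrite -sgE addrC subrK.
exact: dist_comp0 D.
Qed.

Lemma split_mono_summand {X Y : T} (i : Mor X Y) (p : Mor Y X) :
  p \co i = idm X -> direct_summand X Y.
Proof.
move=> pi; have [Z [g [h D]]] := dist_ex i.
by have [sg bp] := dist_split_mono p D pi; exists Z, i, sg, p, g.
Qed.

(* The cone given by TR1 is a shift by essential surjectivity of [1]; TR2 rotates back. *)
Lemma dist_ex_first {Y Z : T} (g : Mor Y Z) :
  exists (X : T) (f : Mor X Y) (h : Mor Z (sh X)), dist f g h.
Proof.
have [W [v [w D]]] := dist_ex g.
have [X [u [u' [u'u uu']]]] := sh_esurj W.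
have D' : dist g (u' \co v) (w \co u).
  apply: (dist_iso (idm _) (idm _) u' _ _ _ _ _ _ D).
  - exact: is_iso_idm.
  - exact: is_iso_idm.
  - by exists u.
  - by rewrite comp_idl comp_idr.
  - by rewrite comp_idr.
  - by rewrite shm1 comp_idl -compA uu' comp_idr.
have [f0 shf0] := shm_full (w \co u).
by exists X, (- f0), (u' \co v); apply: dist_unrot; rewrite shmN opprK shf0.
Qed.

Lemma dist_morph_first {X Y Z X' Y' Z' : T}
    {f : Mor X Y} {g : Mor Y Z} {h : Mor Z (sh X)}
    {f' : Mor X' Y'} {g' : Mor Y' Z'} {h' : Mor Z' (sh X')}
    (b : Mor Y Y') (c : Mor Z Z') :
  dist f g h -> dist f' g' h' -> c \co g = g' \co b ->
  exists a : Mor X X', b \co f = f' \co a /\ shm a \co h = h' \co c.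
Proof.
move=> D D' cg.
have [a' [a'h shbf]] := dist_morph b c (dist_rot D) (dist_rot D') cg.
have [a sha] := shm_full a'; exists a; split; last by rewrite sha.
apply: shm_inj; apply: oppr_inj.
by rewrite !shm_comp -compNr -compNl sha.
Qed.

Lemma dist_square_zero {X Y Z : T} {f : Mor X Y} {g : Mor Y Z} {h : Mor Z (sh X)}
    (phi : Mor X X) :
  dist f g h -> f \co phi = 0 -> shm phi \co h = 0 -> phi \co phi = 0.
Proof.
move=> D fphi0 phih0.
have shfphi0 : (- shm f) \co shm phi = 0.
  by rewrite compNl -shm_comp fphi0 shm0 oppr0.
have [y shphiE] := dist_factor_first _ (dist_rot (dist_rot D)) shfphi0.
by apply: shm_inj; rewrite shm0 shm_comp {2}shphiE compA phih0 comp0l.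
Qed.

Lemma dist_retract_first {X Y Z X' Y' : T}
    {f : Mor X Y} {g : Mor Y Z} {h : Mor Z (sh X)}
    {f' : Mor X' Y'} {g' : Mor Y' Z} {h' : Mor Z (sh X')}
    (i : Mor Y Y') (p : Mor Y' Y) :
  dist f g h -> dist f' g' h' -> p \co i = idm Y ->
  g' \co i = g -> g \co p = g' -> direct_summand X X'.
Proof.
move=> D D' pi g'i gp.
have [c [cf shch]] := dist_morph_first i (idm Z) D D' (etrans (comp_idl g) (esym g'i)).
have [d [df shdh]] := dist_morph_first p (idm Z) D' D (etrans (comp_idl g') (esym gp)).
rewrite comp_idr in shch; rewrite comp_idr in shdh.
pose phi := d \co c - idm X.
have fphi0 : f \co phi = 0.
  by rewrite /phi compBr comp_idr compA -df -compA -cf compA pi comp_idl subrr.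
have phih0 : shm phi \co h = 0.
  by rewrite /phi shmB shm1 compBl comp_idl shm_comp -compA shch shdh subrr.
have phi2 := dist_square_zero phi D fphi0 phih0.
have [e [edc _]] := is_iso_idmD_nilpotent phi phi2.
apply: (split_mono_summand c (e \co d)).
by rewrite -compA -edc /phi addrC subrK.
Qed.

Lemma local_end_addr {C : T} (a b : Mor C C) :
  local_end C -> is_iso (a + b) -> is_iso a \/ is_iso b.
Proof.
move=> [_ loc] [v [vab abv]].
have isov : is_iso v by exists (a + b).
have aE : a = (a \co v) \co (a + b) by rewrite -compA vab comp_idr.
have bE : b = (b \co v) \co (a + b) by rewrite -compA vab comp_idr.
have bvE : idm C - a \co v = b \co v by rewrite -abv compDl addrC addKr.
case: (loc (a \co v)) => [av|]; [left | rewrite bvE => bv; right].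
- by rewrite aE; apply: is_iso_comp => //; exists v.
- by rewrite bE; apply: is_iso_comp => //; exists v.
Qed.

Lemma local_end_sum {C : T} n (phi : 'I_n -> Mor C C) :
  local_end C -> is_iso (\sum_(k < n) phi k) -> exists k, is_iso (phi k).
Proof.
move=> locC; elim: n phi => [|n IH] phi.
  rewrite big_ord0 => -[v [v0 _]].
  by case: locC.1; rewrite /is_zero -v0 comp0r.
rewrite big_ord_recr /= => /(local_end_addr _ _ locC) [|isolast]; last by exists ord_max.
by case/IH => k isok; exists (widen_ord (leqnSn n) k).
Qed.

Lemma local_end_iso {X C : T} (i : Mor X C) (p : Mor C X) :
  p \co i = idm X -> i \co p = idm C -> local_end X -> local_end C.
Proof.
move=> pi ip [X_nz locX]; split.
  move=> C0; apply: X_nz; by rewrite /is_zero -pi -(comp_idl i) C0 comp0l comp0r.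
have conj_iso (F : Mor C C) : is_iso (p \co F \co i) -> is_iso F.
  move=> [t [tF Ft]]; exists (i \co t \co p); split.
  - have E : (i \co t \co p) \co (F \co (i \co p)) = i \co (t \co (p \co F \co i)) \co p.
      by rewrite !compA.
    by rewrite -(comp_idr F) -ip E tF comp_idr ip.
  - have E : (i \co p \co F) \co (i \co t \co p) = i \co ((p \co F \co i) \co t) \co p.
      by rewrite !compA.
    by rewrite -(comp_idl F) -ip E Ft comp_idr ip.
move=> F; case: (locX (p \co F \co i)) => [isoF|]; first by left; apply: conj_iso.
by right; apply: conj_iso; rewrite compBr comp_idr compBl pi.
Qed.

Lemma biprod_zero_r {X1 X2 X : T} {i1 : Mor X1 X} {i2 : Mor X2 X}
    {p1 : Mor X X1} {p2 : Mor X X2} :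
  biprod i1 i2 p1 p2 -> is_zero X2 -> i1 \co p1 = idm X.
Proof.
move=> [_ [_ [_ [_ sumE]]]] X2_zero.
by rewrite -sumE -(comp_idl p2) X2_zero comp0l comp0r addr0.
Qed.

(* The first Krull-Schmidt summand of an indecomposable [C] splits off, so it is all of [C]. *)
Lemma indecomposable_local_end {C : T} : indecomposable C -> local_end C.
Proof.
move=> [C_nz indC].
have [[|n] [Xs [inj [prj [prinj [_ [sumC locXs]]]]]]] := @atc_KS _ T C.
  by case: C_nz; rewrite /is_zero -sumC big_ord0.
have [K [d [w D]]] := dist_ex (inj ord0).
have [sg bp] := dist_split_mono (prj ord0) D (prinj ord0).
case: (indC _ _ _ _ _ _ bp) => [X0_zero|K_zero]; first by case: (locXs ord0).2.
exact: (local_end_iso (inj ord0) (prj ord0) (prinj ord0) (biprod_zero_r bp K_zero)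
  (locXs ord0).2).
Qed.

Lemma dist_factor_summand {A B C : T} {s : Mor A B} {g : Mor B C} {Psi : Mor C (sh A)}
    {n : nat} {Bs : 'I_n -> T} {inB : forall k, Mor (Bs k) B} {prB : forall k, Mor B (Bs k)} :
  dist s g Psi -> (forall u : Mor A C, u = 0) -> (forall u : Mor (sh A) C, u = 0) ->
  local_end C -> \sum_(k < n) (inB k \co prB k) = idm B ->
  exists k (h : Mor (Bs k) C), g = h \co prB k.
Proof.
move=> D HomAC HomA1C locC sumB.
have [ph phE] :=
  fin_all_exists (fun k => dist_factor_third (g \co inB k \co prB k) D (HomAC _)).
have sum_ph : \sum_(k < n) ph k = idm C.
  apply/eqP; rewrite -subr_eq0; apply/eqP; apply: (dist_third_zero _ D HomA1C).
  rewrite compBl comp_idl comp_suml.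
  under eq_bigr => k _ do rewrite -phE -compA.
  by rewrite -comp_sumr sumB comp_idr subrr.
have [k [psi [psiph _]]] : exists k, is_iso (ph k).
  by apply: (local_end_sum _ ph locC); rewrite sum_ph; apply: is_iso_idm.
by exists k, (psi \co (g \co inB k)); rewrite -compA phE compA psiph comp_idl.
Qed.

End ArtinTriCatTheory.

Theorem proposition3p5 (R : comPzRingType) (T : ArtinTriCat R) (A B C : T)
    (s : Mor A B) (g : Mor B C) (Psi : Mor C (sh A)) :
  dist s g Psi -> Psi <> 0 ->
  (forall f : Mor A C, f = 0) -> (forall f : Mor (sh A) C, f = 0) ->
  indecomposable C ->
  exists (A' B' : T) (s' : Mor A' B') (g' : Mor B' C) (Psi' : Mor C (sh A')),
    dist s' g' Psi' /\ Psi' <> 0 /\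
    direct_summand A' A /\ direct_summand B' B /\ indecomposable B'.
Proof.
move=> D Psi_nz HomAC HomA1C indC.
have [m [Bs [inB [prB [prinB [_ [sumB indB]]]]]]] := @atc_KS _ T B.
have [k [h gE]] := dist_factor_summand D HomAC HomA1C (indecomposable_local_end indC) sumB.
have hE : g \co inB k = h by rewrite gE -compA prinB comp_idr.
have [Ak [sk [Psik Dk]]] := dist_ex_first h.
exists Ak, (Bs k), sk, h, Psik; split; first exact: Dk.
split.
  move=> Psik0; have [y hy] := dist_split_epi Dk Psik0; apply: Psi_nz.
  by rewrite -(comp_idr Psi) -hy -hE !compA (dist_comp0 (dist_rot D)) !comp0l.
split; first exact: (dist_retract_first (inB k) (prB k) Dk D (prinB k) hE (esym gE)).
split; first exact: (split_mono_summand (inB k) (prB k) (prinB k)).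
exact: (indB k).1.
Qed.
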